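(* Let $G$ be a group, $H$ a subgroup, $A$ a complex vector space, and let $g,g_1,\dots,g_n:G\to A$ and $f_1,\dots,f_n:G\to\mathbb C$ be functions such that $\chi_H(xy)g(y)=\sum_{i=1}^n f_i(x)g_i(y)$ for all $x,y\in G$. Then there is a finite set $F\subseteq G$ such that $g(y)=0$ for all $y\notin FH$.
   Context: $\chi_H$ is the characteristic function of $H$. *)

From HB Require Import structures.
From mathcomp Require Import all_boot all_order all_algebra.
From mathcomp Require Import complex.
From mathcomp Require Import Rstruct.
From Stdlib Require Rdefinitions.
Set Implicit Arguments. Unset Strict Implicit. Unset Printing Implicit Defensive.
Import GRing.Theory Num.Theory.

Definition CC := (Rdefinitions.R)[i].

Definition chi (G : Type) (H : {pred G}) (x : G) : CC := ((x \in H)%:R)%R.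

Definition in_prodset (G : groupType) (F : seq G) (H : {pred G}) (y : G) : Prop :=
  exists f h, [/\ f \in F, h \in H & y = (f * h)%g].

From HB Require Import structures.
From mathcomp Require Import all_boot all_order all_algebra.
From mathcomp Require Import complex.
From mathcomp Require Import Rstruct.
From Stdlib Require Import Classical.
Set Implicit Arguments.
Unset Strict Implicit.
Unset Printing Implicit Defensive.
Import GRing.Theory Num.Theory.
Local Open Scope ring_scope.

(* If y_1, ..., y_m lie in pairwise distinct left cosets of H and
   g (y_k) <> 0 for all k, then the rows (f_i (y_k^-1))_i of C^n are linearly
   independent: specialising the identity at x = y_k^-1, y = y_j isolates the
   j-th coefficient of any linear relation, since chi_H (y_k^-1 y_j) = [k = j].
   Hence m <= n, and a maximal such family F satisfies g = 0 outside F H. *)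

Lemma exists_maximal_seq (T : Type) (P : seq T -> Prop) (n : nat) :
  P [::] -> (forall s, P s -> (size s <= n)%N) ->
  exists2 s, P s & forall x, ~ P (x :: s).
Proof.
move=> P0 Pn; suff: forall k s, P s -> (n - size s <= k)%N ->
    exists2 s, P s & forall x, ~ P (x :: s).
  by move/(_ n [::] P0); apply; rewrite subn0.
elim=> [|k IHk] s Ps le_ns.
  exists s => // x Pxs; have := Pn _ Pxs.
  by rewrite /= ltnNge -subn_eq0 -leqn0 le_ns.
have [[x Pxs] | maximal] := classic (exists x, P (x :: s)); last first.
  by exists s => // x Pxs; apply: maximal; exists x.
apply: (IHk _ Pxs); have := Pn _ Pxs; rewrite /= subnS => lt_sn.
by rewrite -ltnS prednK ?subn_gt0.
Qed.

Lemma groupClosed_invMC (G : groupType) (H : groupClosed G) (a b : G) :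
  ((a^-1 * b)%g \in H) = ((b^-1 * a)%g \in H).
Proof. by rewrite -(gpredV H) invgM invgK. Qed.

Section SupportInFiniteUnionOfCosets.

Variables (G : groupType) (H : groupClosed G) (A : lmodType CC) (n : nat).
Variables (g : G -> A) (gs : 'I_n -> G -> A) (fs : 'I_n -> G -> CC).
Hypothesis chi_decomp : forall x y : G,
  chi H (x * y)%g *: g y = \sum_(i < n) fs i x *: gs i y.

Definition cosets_separated (s : seq G) :=
  pairwise (fun a b => (a^-1 * b)%g \notin H) s.

Lemma card_separated_support m (y : 'I_m -> G) :
  (forall j k, j != k -> ((y k)^-1 * y j)%g \notin H) ->
  (forall j, g (y j) != 0) -> (m <= n)%N.
Proof.
move=> separated g_nz; pose M : 'M[CC]_(m, n) := \matrix_(k, i) fs i (y k)^-1%g.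
suff /eqP <- : row_free M by exact: rank_leq_col.
apply: inj_row_free => v vM0; apply/rowP => j; rewrite mxE.
have isolate_j : \sum_k v 0 k *: (chi H ((y k)^-1 * y j)%g *: g (y j))
                 = v 0 j *: g (y j).
  rewrite (bigD1 j) //= mulVg /chi gpred1 scale1r big1 ?addr0 // => k neq_kj.
  by rewrite (negbTE (separated _ _ _)) ?scale0r ?scaler0 // eq_sym.
have vanish : \sum_k v 0 k *: (chi H ((y k)^-1 * y j)%g *: g (y j)) = 0.
  under eq_bigr do rewrite chi_decomp scaler_sumr.
  rewrite exchange_big big1 //= => i _.
  under eq_bigr do rewrite scalerA.
  rewrite -scaler_suml; suff -> : \sum_k v 0 k * fs i (y k)^-1%g = (v *m M) 0 i.
    by rewrite vM0 mxE scale0r.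
  by rewrite mxE; apply: eq_bigr => k _; rewrite mxE.
apply/eqP; move: vanish; rewrite isolate_j => /eqP.
by rewrite scaler_eq0 (negbTE (g_nz j)) orbF.
Qed.

Lemma size_separated_support (s : seq G) :
  all (fun y => g y != 0) s -> cosets_separated s -> (size s <= n)%N.
Proof.
move=> /allP g_nz /(pairwiseP 1%g) separated.
apply: (@card_separated_support _ (fun j : 'I_(size s) => nth 1%g s j)).
  move=> j k; rewrite neq_ltn => /orP[] lt_jk.
    by rewrite /= groupClosed_invMC; exact: separated (ltn_ord j) (ltn_ord k) lt_jk.
  exact: separated (ltn_ord k) (ltn_ord j) lt_jk.
by move=> j; apply: g_nz; apply: mem_nth.
Qed.

End SupportInFiniteUnionOfCosets.

Theorem lemma1p6 (G : groupType) (H : groupClosed G) (A : lmodType CC)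
  (n : nat) (g : G -> A) (gs : 'I_n -> G -> A) (fs : 'I_n -> G -> CC) :
  (forall x y : G,
      (chi H (x * y)%g *: g y)%R = (\sum_(i < n) fs i x *: gs i y)%R) ->
  exists F : seq G, forall y : G, ~ in_prodset F H y -> g y = 0%R.
Proof.
move=> chi_decomp.
pose good s := all (fun y => g y != 0) s && cosets_separated H s.
have [||F good_F maximal] := @exists_maximal_seq G good n.
- by [].
- move=> s /andP[]; exact: (size_separated_support chi_decomp).
exists F => y y_notin_FH; apply/eqP; apply: contraT => gy_nz; case: (maximal y).
case/andP: good_F => g_nz separated.
rewrite /good /= gy_nz g_nz separated /= andbT.
apply/allP => f f_in_F; apply: contra_notN y_notin_FH => yf_in_H.
exists f, (f^-1 * y)%g; split => //; first by rewrite groupClosed_invMC.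
by rewrite mulVKg.
Qed.
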